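(* For every $1 \leq q \leq Q$, \[ (Z-Z'_q)_- \leq 8Kt\,\mathbf{1}_{R_q}, \] where $(a)_-:=\max\{-a,0\}$.
   Context: Let $d \geq 2$. Let $\omega=(\omega(x))_{x \in \mathbb{Z}^d}$ be independent random variables with a common law on $\mathbb{N}_0$, not concentrated at $0$. Independently of $\omega$, let $(S_k(x,\ell))_{k \geq 0}$, $x \in \mathbb{Z}^d$, $\ell \in \mathbb{N}$, be independent simple random walks on $\mathbb{Z}^d$ with $S_0(x,\ell)=x$. For $x,y \in \mathbb{Z}^d$ let $\tau(x,y):=\inf\{k \geq 0: S_k(x,\ell)=y \text{ for some } 1 \leq \ell \leq \omega(x)\}$ ($:=\infty$ if $\omega(x)=0$). Let $C_0\in(0,\infty)$ be a constant for which there are $0<c,c'<\infty$, $0<a<1$ with $P(T(0,x)\ge s\mid\omega(0)\ge 1)\le c\,e^{-c's^{a}}$ for all $x\in\mathbb{Z}^d$ and $s\ge C_0\|x\|_1$, where $T(x,y):=\inf\{\sum_{i=0}^{m-1}\tau(x_i,x_{i+1}): m \geq 1,\ x=x_0,\dots,x_m=y\}$. Fix $\gamma>0$ and a constant $K>d(C_0+\gamma+1)$. For $t>0$ define $\sigma_t(x,y)$ by: $\sigma_t(x,y):=4Kt$ if $\|x-y\|_\infty\le t$ and $\tau(x,y)>4Kt$; $\sigma_t(x,y):=4K\|x-y\|_\infty$ if $\|x-y\|_\infty>t$; $\sigma_t(x,y):=\tau(x,y)$ otherwise; and $T_t(x,y):=\inf\{\sum_{i=0}^{m-1}\sigma_t(x_i,x_{i+1}):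 m\ge 1,\ x=x_0,\dots,x_m=y\}$. Fix $x\in\mathbb{Z}^d\setminus\{0\}$ and $t>0$. Tile $\mathbb{Z}^d$ with copies $\Lambda_q$, $q\in\mathbb{N}$, of $(-t/2,t/2]^d$, each centered at a point of $\mathbb{Z}^d$, so that each site lies in exactly one box, and let $U_q:=((\omega(z))_{z\in\Lambda_q},(S_\cdot(z,\ell))_{z\in\Lambda_q,\ell\in\mathbb{N}})$. Number the boxes so that $Z:=T_t(0,x)$ is a function $T_t(0,x,U_1,\dots,U_Q)$ of $U_1,\dots,U_Q$ for some finite $Q$. Let $(U'_q)_{q=1}^Q$ be independent copies of $(U_q)_{q=1}^Q$ and $Z'_q:=T_t(0,x,U_1,\dots,U_{q-1},U'_q,U_{q+1},\dots,U_Q)$. Let $\pi_t(0,x)=(0=x_0,x_1,\dots,x_m=x)$ be a sequence with $T_t(0,x)=\sum_{i=0}^{m-1}\sigma_t(x_i,x_{i+1})$, chosen by a deterministic tie-breaking rule, and let $R_q$ be the event that $\pi_t(0,x)$ intersects $\Lambda_q$. *)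

From HB Require Import structures.
From mathcomp Require Import all_boot all_order all_algebra.
From mathcomp Require Import boolp classical_sets reals ereal.
Set Implicit Arguments. Unset Strict Implicit. Unset Printing Implicit Defensive.
Import Order.TTheory GRing.Theory Num.Theory.
Local Open Scope classical_set_scope.
Local Open Scope ring_scope.

Definition pt (d : nat) := {ffun 'I_d -> int}.
Definition origin (d : nat) : pt d := [ffun => 0%Z].

Definition ninf d (x y : pt d) : nat := (\max_(i < d) `|x i - y i|%N)%N.
Definition norm1 d (x y : pt d) : nat := (\sum_(i < d) `|x i - y i|%N)%N.

(* A realization of omega = (omega(z))_z and of the walks
   S_k(z, l), z in Z^d, l >= 1, k >= 0:  walk z l k = S_k(z,l). *)
Record config (d : nat) := Config {
  om : pt d -> nat ;
  walk : pt d -> nat -> nat -> pt d }.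

Definition valid_config d (C : config d) : Prop :=
  forall z l, walk C z l 0 = z /\ forall k, norm1 (walk C z l k.+1) (walk C z l k) = 1%N.

(* S_k(x,l) = y for some 1 <= l <= omega(x) *)
Definition hit d (C : config d) (x y : pt d) (k : nat) : bool :=
  [exists l : 'I_(om C x), walk C x l.+1 k == y].

Section Passage.
Variable R : realType.
Local Open Scope ereal_scope.
(* tau(x,y) in [0, +oo]; the infimum of the empty set is +oo *)
Definition tau d (C : config d) (x y : pt d) : \bar R :=
  ereal_inf [set (k%:R)%:E | k in [set k | hit C x y k]].
Local Close Scope ereal_scope.

Definition sigma d (C : config d) (K t : R) (x y : pt d) : R :=
  if t < (ninf x y)%:R then 4 * K * (ninf x y)%:R
  else if ((4 * K * t)%:E < tau C x y)%E then 4 * K * t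
  else fine (tau C x y).

(* cost of the sequence a = x_0, x_1, ..., x_m where p = [:: x_1; ...; x_m] *)
Definition path_cost d (C : config d) (K t : R) (a : pt d) (p : seq (pt d)) : R :=
  \sum_(e <- zip (a :: p) p) sigma C K t e.1 e.2.

Definition is_path d (a b : pt d) (p : seq (pt d)) : Prop :=
  p != [::] /\ last a p = b.

Definition Tt d (C : config d) (K t : R) (a b : pt d) : R :=
  inf [set path_cost C K t a p | p in [set p | is_path a b p]].

Definition geodesic d (C : config d) (K t : R) (a b : pt d) (p : seq (pt d)) : Prop :=
  is_path a b p /\ path_cost C K t a p = Tt C K t a b.

Definition in_box d (t : R) (c z : pt d) : Prop :=
  forall i : 'I_d, (c i)%:~R - t / 2 < (z i)%:~R <= (c i)%:~R + t / 2.

(* C' is obtained from C by resampling only the variables attached to the box *)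
Definition agree_outside d (t : R) (c : pt d) (C C' : config d) : Prop :=
  forall z, ~ in_box t c z -> om C' z = om C z /\ walk C' z = walk C z.

Definition indic (P : Prop) : R := if `[< P >] then 1 else 0.

Definition neg_part (a : R) : R := Num.max (- a) 0.
End Passage.

From HB Require Import structures.
From mathcomp Require Import all_boot all_order all_algebra.
From mathcomp Require Import boolp classical_sets reals ereal.
From mathcomp Require Import lra.
Import Order.TTheory GRing.Theory Num.Theory.
Set Implicit Arguments. Unset Strict Implicit.
Local Open Scope ring_scope.

(* The edge cost sigma_t(a, b) only reads the variables attached to its
   starting point a, is always in [0, 4Kt] when ||a - b||_oo <= t, and any
   resampling raises it by at most 4Kt.  If the geodesic of C never enters
   the box, it costs the same under C'.  Otherwise jump directly from its
   first to its last point in the box: the unchanged prefix is kept, the jump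
   costs at most 4Kt, the first step after the jump rises by at most 4Kt, the
   rest is unchanged, and the skipped middle part had nonnegative cost.  Hence
   T'_t <= T_t + 8Kt, i.e. (T_t - T'_t)_- <= 8Kt. *)

Lemma split_first_hit (T : Type) (P : pred T) a (p : seq T) : has P (a :: p) ->
  exists p1 p2, [/\ p = p1 ++ p2, P (last a p1) & ~~ has P (belast a p1)].
Proof.
elim: p a => [|b p IH] a; first by rewrite /= orbF => Pa; exists [::], [::].
case Pa: (P a); first by exists [::], (b :: p); rewrite /= Pa.
rewrite [has _ _]/= Pa => hasP; have [p1 [p2 [-> Plast off]]] := IH b hasP.
by exists (b :: p1), p2; rewrite /= Pa.
Qed.

Lemma split_last_hit (T : Type) (P : pred T) a (p : seq T) : has P (a :: p) ->
  exists p1 p2, [/\ p = p1 ++ p2, P (last a p1) & ~~ has P p2].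
Proof.
elim: p a => [|b p IH] a; first by rewrite /= orbF => Pa; exists [::], [::].
case hasP: (has P (b :: p)).
  by have [p1 [p2 [-> Plast off]]] := IH b hasP; exists (b :: p1), p2.
by rewrite /= -/(has P (b :: p)) hasP orbF => Pa; exists [::], (b :: p); rewrite hasP.
Qed.

Section EdgeCost.
Variables (R : realType) (d : nat) (K t : R).
Hypotheses (K_ge0 : 0 <= K) (t_ge0 : 0 <= t).

Lemma tau_ge0 (C : config d) a b : (0 <= tau R C a b)%E.
Proof. by apply/ereal_infP => _ [k _ <-]; rewrite lee_fin ler0n. Qed.

Lemma sigma_ge0 (C : config d) a b : 0 <= sigma C K t a b.
Proof.
rewrite /sigma; case: ifP => _; first by rewrite !mulr_ge0.
by case: ifP => _; [rewrite !mulr_ge0 | exact/fine_ge0/tau_ge0].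
Qed.

Lemma sigma_le_near (C : config d) a b :
  (ninf a b)%:R <= t -> sigma C K t a b <= 4 * K * t.
Proof.
move=> near; rewrite /sigma ltNge near /=.
case: ifP => // /negbT; rewrite -leNgt.
by case: (tau R C a b) => [r| |] //= _; rewrite !mulr_ge0.
Qed.

Lemma sigma_le_resample (C C' : config d) a b :
  sigma C' K t a b <= sigma C K t a b + 4 * K * t.
Proof.
have [far|near] := ltP t (ninf a b)%:R.
  by rewrite /sigma far lerDl !mulr_ge0.
by rewrite (le_trans (sigma_le_near C' near)) // lerDr sigma_ge0.
Qed.

Lemma sigma_eq_at (C C' : config d) a b :
  om C' a = om C a -> walk C' a = walk C a -> sigma C' K t a b = sigma C K t a b.
Proof. by move=> om_a walk_a; rewrite /sigma /tau /hit om_a walk_a. Qed.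

Lemma path_cost_nil (C : config d) a : path_cost C K t a [::] = 0.
Proof. by rewrite /path_cost big_nil. Qed.

Lemma path_cost_cons (C : config d) a b p :
  path_cost C K t a (b :: p) = sigma C K t a b + path_cost C K t b p.
Proof. by rewrite /path_cost big_cons. Qed.

Lemma path_cost_cat (C : config d) a p1 p2 :
  path_cost C K t a (p1 ++ p2) = path_cost C K t a p1 + path_cost C K t (last a p1) p2.
Proof.
elim: p1 a => [|b p1 IH] a; first by rewrite path_cost_nil add0r.
by rewrite cat_cons !path_cost_cons IH addrA.
Qed.

Lemma path_cost_ge0 (C : config d) a p : 0 <= path_cost C K t a p.
Proof. by apply: sumr_ge0 => e _; exact: sigma_ge0. Qed.

Lemma path_cost_eq (C C' : config d) a p :
  (forall z, z \in belast a p -> om C' z = om C z /\ walk C' z = walk C z) ->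
  path_cost C' K t a p = path_cost C K t a p.
Proof.
elim: p a => [|b p IH] a agree; first by rewrite !path_cost_nil.
rewrite !path_cost_cons.
have [om_a walk_a] := agree a (mem_head _ _).
by rewrite (sigma_eq_at _ om_a walk_a) IH // => z z_in; apply: agree; rewrite inE z_in orbT.
Qed.

Lemma Tt_le_path_cost (C : config d) a b p :
  is_path a b p -> Tt C K t a b <= path_cost C K t a p.
Proof.
move=> p_path; apply: ge_inf; last by exists p.
by exists 0 => _ [q _ <-]; exact: path_cost_ge0.
Qed.

End EdgeCost.

Section Resampling.
Variables (R : realType) (d : nat) (K t : R) (C C' : config d) (S : pred (pt d)).
Hypotheses (K_ge0 : 0 <= K) (t_ge0 : 0 <= t).
Hypothesis S_near : forall a b, S a -> S b -> (ninf a b)%:R <= t.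
Hypothesis agree_off_S :
  forall z, ~~ S z -> om C' z = om C z /\ walk C' z = walk C z.

Lemma path_cost_eq_off_S a p :
  ~~ has S (belast a p) -> path_cost C' K t a p = path_cost C K t a p.
Proof. by move/hasPn=> off; apply: path_cost_eq => z /off; exact: agree_off_S. Qed.

Lemma path_cost_le_off_S a p :
  ~~ has S p -> path_cost C' K t a p <= path_cost C K t a p + 4 * K * t.
Proof.
case: p => [|b p] off; first by rewrite !path_cost_nil add0r !mulr_ge0.
rewrite !path_cost_cons path_cost_eq_off_S; last first.
  by apply: contra off => /hasP[z /mem_belast z_in Sz]; apply/hasP; exists z.
by have := sigma_le_resample K_ge0 t_ge0 C C' a b; lra.
Qed.

Lemma shortcut_path a p : has S (a :: p) ->
  exists2 q, q != [::] /\ last a q = last a p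
           & path_cost C' K t a q <= path_cost C K t a p + 8 * K * t.
Proof.
move=> hit; have [p1 [p23 [-> Sy off1]]] := split_first_hit hit.
set y := last a p1 in Sy.
have y_hit : has S (y :: p23) by rewrite /= Sy.
have [p2 [p3 [-> Sw off3]]] := split_last_hit y_hit.
set w := last y p2 in Sw; exists (p1 ++ w :: p3).
  by rewrite -size_eq0 size_cat addnS !last_cat.
rewrite !path_cost_cat -/y path_cost_cons -/w path_cost_eq_off_S //.
have jump := sigma_le_near K_ge0 t_ge0 C' (S_near Sy Sw).
have tail := path_cost_le_off_S w off3.
have middle := path_cost_ge0 K_ge0 t_ge0 C y p2.
lra.
Qed.

Lemma resampled_path a b p : is_path a b p ->
  exists2 q, is_path a b q &
    path_cost C' K t a q <= path_cost C K t a p + 8 * K * t * (has S (a :: p))%:R.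
Proof.
move=> [p_nil p_end]; have [hit|miss] := boolP (has S (a :: p)).
  have [q [q_nil q_end] q_cost] := shortcut_path hit.
  by exists q; [split; rewrite ?q_end | rewrite mulr1].
exists p => //; rewrite mulr0 addr0 path_cost_eq_off_S //.
by apply: contra miss => /hasP[z /mem_belast z_in Sz]; apply/hasP; exists z.
Qed.

End Resampling.

Lemma in_box_near (R : realType) d (t : R) (c a b : pt d) : 0 <= t ->
  in_box t c a -> in_box t c b -> (ninf a b)%:R <= t.
Proof.
move=> t_ge0 a_in b_in; rewrite /ninf.
elim/big_ind: _ => // [m n|i _]; first by case: (leqP m n).
rewrite natr_absz intr_norm rmorphB /=.
move: (a_in i) (b_in i) => /andP[? ?] /andP[? ?].
by rewrite ler_norml; apply/andP; split; lra.
Qed.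

Lemma indic_exists_mem (R : realType) (T : eqType) (P : T -> Prop) (s : seq T) :
  indic R (exists z, z \in s /\ P z) = (has (fun z => `[< P z >]) s)%:R.
Proof.
rewrite /indic; case: (boolP (has _ s)) => [/hasP[z z_in /asboolP Pz]|].
  by rewrite asboolT //; exists z.
by move/hasPn=> off; rewrite asboolF // => -[z [/off /asboolP]].
Qed.

Lemma neg_part_sub_le (R : realType) (u v M : R) :
  0 <= M -> v <= u + M -> neg_part (u - v) <= M.
Proof. by move=> M_ge0 v_le; rewrite /neg_part ge_max M_ge0 andbT; lra. Qed.

Theorem lemma4p3 (R : realType) (d : nat) (hd : (2 <= d)%N)
  (C0 gam K t : R) (hC0 : 0 < C0) (hgam : 0 < gam)
  (hK : d%:R * (C0 + gam + 1) < K) (ht : 0 < t)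
  (x : pt d) (hx : x != origin d)
  (c : pt d) (C C' : config d)
  (hC : valid_config C) (hC' : valid_config C')
  (hagree : agree_outside t c C C')
  (p : seq (pt d)) (hgeo : geodesic C K t (origin d) x p) :
  neg_part (Tt C K t (origin d) x - Tt C' K t (origin d) x)
    <= 8 * K * t * indic R (exists z, z \in origin d :: p /\ in_box t c z).
Proof.
have K_ge0 : 0 <= K.
  apply: ltW (le_lt_trans _ hK); rewrite mulr_ge0 ?ler0n //; lra.
have t_ge0 := ltW ht.
pose S z := `[< in_box t c z >].
have S_near a b : S a -> S b -> (ninf a b)%:R <= t.
  by move=> /asboolP a_in /asboolP b_in; exact: in_box_near.
have agree z : ~~ S z -> om C' z = om C z /\ walk C' z = walk C z.
  by move/asboolPn; exact: hagree.
case: hgeo => p_path <-.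
have [q q_path q_cost] := resampled_path K_ge0 t_ge0 S_near agree p_path.
rewrite indic_exists_mem; apply: neg_part_sub_le.
  by rewrite !mulr_ge0 ?ler0n.
exact: le_trans (Tt_le_path_cost K_ge0 t_ge0 C' q_path) q_cost.
Qed.
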